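(* Let $\theta_1,\dots,\theta_{10}$ be real numbers such that $0<\theta_i<\theta_j<\theta_k<180$ for each of the triples $(i,j,k)\in\{(2,4,6),(1,5,9),(1,5,10),(1,5,7),(1,3,7),(1,4,7),(3,5,8),(2,8,9),(6,7,10)\}$, and write $s_{ij}=\sin(\theta_j-\theta_i)$. Suppose $$s_{89}\,s_{1,10}\,s_{24}\,s_{35}\,s_{67}+s_{46}\,s_{19}\,s_{7,10}\,s_{35}\,s_{28}-s_{46}\,s_{38}\,s_{7,10}\,s_{29}\,s_{15}=0 .$$ Then there is no $\mathbf r=(r_1,\dots,r_{10})\in\mathbb{R}^{10}$ satisfying simultaneously the nine strict inequalities $$r_is_{jk}-r_js_{ik}+r_ks_{ij}>0\quad\text{for }(i,j,k)\in\{(2,4,6),(1,5,9),(1,5,10),(1,5,7)\},$$ $$-r_is_{jk}+r_js_{ik}-r_ks_{ij}>0\quad\text{for }(i,j,k)\in\{(1,3,7),(1,4,7),(3,5,8),(2,8,9),(6,7,10)\}.$$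
   Context: Angles are in degrees. *)

From Stdlib Require Import Reals.
Open Scope R_scope.

Definition sind (x : R) : R := sin (x * PI / 180).

(* s_{ij} = sin(theta_j - theta_i), angles in degrees; indices 1..10 *)
Definition s (th : nat -> R) (i j : nat) : R := sind (th j - th i).

Definition ord3 (th : nat -> R) (i j k : nat) : Prop :=
  0 < th i /\ th i < th j /\ th j < th k /\ th k < 180.

Definition D (th r : nat -> R) (i j k : nat) : R :=
  r i * s th j k - r j * s th i k + r k * s th i j.

(* With a_i = theta_i in radians, s_ij = sin a_j cos a_i - cos a_j sin a_i is a 2x2
   determinant, and a polynomial identity expresses P * D_157, where P is the left-hand
   side of the hypothesis, as a combination of the other eight D's (with the signs of
   the hypotheses) whose coefficients are products of sines of angle differences lying
   in (0, 180), hence positive.  If P = 0 and all nine inequalities held, a sum of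
   eight positive numbers would vanish. *)
From Pilot Require Import Defs.
From Stdlib Require Import Reals Lra.
Open Scope R_scope.

Definition rad (x : R) : R := x * PI / 180.

Lemma s_sin_cos (th : nat -> R) (i j : nat) :
  s th i j = sin (rad (th j)) * cos (rad (th i)) - cos (rad (th j)) * sin (rad (th i)).
Proof.
  unfold s, Defs.sind, rad.
  replace ((th j - th i) * PI / 180) with (th j * PI / 180 - th i * PI / 180) by field.
  apply sin_minus.
Qed.

Lemma sind_gt0 (x : R) : 0 < x < 180 -> 0 < Defs.sind x.
Proof.
  intros [x_gt0 x_lt180]. pose proof PI_RGT_0 as PI_gt0.
  unfold Defs.sind. apply sin_gt_0.
  - apply Rdiv_lt_0_compat; [apply Rmult_lt_0_compat|]; lra.
  - replace (x * PI / 180) with (PI * (x / 180)) by field.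
    rewrite <- (Rmult_1_r PI) at 2.
    apply Rmult_lt_compat_l; [lra|].
    apply (Rmult_lt_reg_r 180); [lra|]. unfold Rdiv. rewrite Rmult_assoc, Rinv_l; lra.
Qed.

Lemma s_gt0 (th : nat -> R) (i j : nat) :
  0 < th i -> th i < th j -> th j < 180 -> 0 < s th i j.
Proof. intros; apply sind_gt0; lra. Qed.

Definition sine_relation (th : nat -> R) : R :=
  s th 8 9 * s th 1 10 * s th 2 4 * s th 3 5 * s th 6 7
  + s th 4 6 * s th 1 9 * s th 7 10 * s th 3 5 * s th 2 8
  - s th 4 6 * s th 3 8 * s th 7 10 * s th 2 9 * s th 1 5.

Lemma sine_relation_D157_combination (th r : nat -> R) :
    (s th 8 9 * s th 1 5 * s th 3 5 * s th 1 7 * s th 7 10) * D th r 2 4 6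
  + (s th 4 6 * s th 2 8 * s th 3 5 * s th 1 7 * s th 7 10) * D th r 1 5 9
  + (s th 2 4 * s th 6 7 * s th 8 9 * s th 3 5 * s th 1 7) * D th r 1 5 10
  + (s th 4 6 * s th 2 9 * s th 5 8 * s th 1 5 * s th 7 10) * (- D th r 1 3 7)
  + (s th 2 6 * s th 8 9 * s th 1 5 * s th 3 5 * s th 7 10) * (- D th r 1 4 7)
  + (s th 4 6 * s th 2 9 * s th 1 5 * s th 1 7 * s th 7 10) * (- D th r 3 5 8)
  + (s th 4 6 * s th 1 5 * s th 3 5 * s th 1 7 * s th 7 10) * (- D th r 2 8 9)
  + (s th 2 4 * s th 8 9 * s th 1 5 * s th 3 5 * s th 1 7) * (- D th r 6 7 10)
  = sine_relation th * D th r 1 5 7.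
Proof. unfold sine_relation, D. rewrite !s_sin_cos. ring. Qed.

Ltac prod_pos := repeat apply Rmult_lt_0_compat; try assumption; apply s_gt0; lra.

Theorem lemmal (th : nat -> R) :
  ord3 th 2 4 6 -> ord3 th 1 5 9 -> ord3 th 1 5 10 -> ord3 th 1 5 7 ->
  ord3 th 1 3 7 -> ord3 th 1 4 7 -> ord3 th 3 5 8 -> ord3 th 2 8 9 ->
  ord3 th 6 7 10 ->
  s th 8 9 * s th 1 10 * s th 2 4 * s th 3 5 * s th 6 7
  + s th 4 6 * s th 1 9 * s th 7 10 * s th 3 5 * s th 2 8
  - s th 4 6 * s th 3 8 * s th 7 10 * s th 2 9 * s th 1 5 = 0 ->
  ~ exists r : nat -> R,
      D th r 2 4 6 > 0 /\ D th r 1 5 9 > 0 /\ D th r 1 5 10 > 0 /\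
      D th r 1 5 7 > 0 /\
      - D th r 1 3 7 > 0 /\ - D th r 1 4 7 > 0 /\ - D th r 3 5 8 > 0 /\
      - D th r 2 8 9 > 0 /\ - D th r 6 7 10 > 0.
Proof.
  unfold ord3.
  intros O1 O2 O3 O4 O5 O6 O7 O8 O9 P0 [r [E1 [E2 [E3 [_ [E5 [E6 [E7 [E8 E9]]]]]]]]].
  pose proof (sine_relation_D157_combination th r) as comb.
  fold (sine_relation th) in P0. rewrite P0, Rmult_0_l in comb.
  assert (0 < s th 8 9 * s th 1 5 * s th 3 5 * s th 1 7 * s th 7 10) by prod_pos.
  assert (0 < s th 4 6 * s th 2 8 * s th 3 5 * s th 1 7 * s th 7 10) by prod_pos.
  assert (0 < s th 2 4 * s th 6 7 * s th 8 9 * s th 3 5 * s th 1 7) by prod_pos.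
  assert (0 < s th 4 6 * s th 2 9 * s th 5 8 * s th 1 5 * s th 7 10) by prod_pos.
  assert (0 < s th 2 6 * s th 8 9 * s th 1 5 * s th 3 5 * s th 7 10) by prod_pos.
  assert (0 < s th 4 6 * s th 2 9 * s th 1 5 * s th 1 7 * s th 7 10) by prod_pos.
  assert (0 < s th 4 6 * s th 1 5 * s th 3 5 * s th 1 7 * s th 7 10) by prod_pos.
  assert (0 < s th 2 4 * s th 8 9 * s th 1 5 * s th 3 5 * s th 1 7) by prod_pos.
  nra.
Qed.
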